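(* Let $X$ be a compact Hausdorff space, $\mathcal C=C(X)$ with the supremum norm, $\alpha\colon X\to X$ continuous, $\delta f=f\circ\alpha$, and $A$ a transfer operator for $(\mathcal C,\delta)$. Then for every $\varphi\in\mathcal C$ and every $\mu\in M_\delta(\mathcal C)$, \[ \lambda(\varphi)\ge \mu[\varphi]+\tau(\mu). \]
   Context: A transfer operator for $(\mathcal C,\delta)$ is a positive linear operator $A\colon\mathcal C\to\mathcal C$ with $A((\delta f)g)=f\,Ag$ for all $f,g\in\mathcal C$. $A_\varphi f=A(e^\varphi f)$ and $\lambda(\varphi)=\lim_{n\to\infty}\frac1n\ln\|A_\varphi^n\mathbf 1\|$ ($\mathbf 1$ the constant function $1$). $M(\mathcal C)$ is the set of positive linear functionals $m$ on $\mathcal C$ with $m[\mathbf 1]=1$; $M_\delta(\mathcal C)$ those with additionally $\mu[\delta f]=\mu[f]$ for all $f$. A partition of unity is a finite set $D$ of nonnegative elements of $\mathcal C$ summing to $\mathbf 1$. For $\mu\in M_\delta(\mathcal C)$: $\tau_n(\mu,D)=\sup_{m\in M(\mathcal C)}\sum_{g\in D}\mu[g]\ln\frac{m[A^ng]}{\mu[g]}$, $\tau_n(\mu)=\inf_D\tau_n(\mu,D)$ over all partitions of unity, $\tau(\mu)=\inf_{n\in\mathbb N}\tau_n(\mu)/n$; summands with $\mu[g]=0$ are set to $0$, $\ln0=-\infty$, and if some $g\in D$ has $A^ng=0$ and $\mu[g]>0$ then $\tau(\mu)=-\infty$. *)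

From HB Require Import structures.
From mathcomp Require Import all_boot all_order all_algebra.
From mathcomp Require Import all_classical all_reals all_analysis.
Set Implicit Arguments. Unset Strict Implicit. Unset Printing Implicit Defensive.
Import Order.TTheory GRing.Theory Num.Theory.
Import numFieldNormedType.Exports.
Local Open Scope classical_set_scope.
Local Open Scope ring_scope.

(* Operators / functionals on C(X) are
   represented by maps on X -> R, and all hypotheses are only imposed on
   continuous arguments. *)

Section Defs.
Variables (R : realType) (X : topologicalType).

Definition contfun (f : X -> R) : Prop := continuous f.

Definition supnorm (f : X -> R) : R := sup [set `|f x| | x in [set: X]].

Definition cst1 : X -> R := fun _ => 1.

Definition pos_lin_op (A : (X -> R) -> (X -> R)) : Prop :=
  [/\ (forall f, contfun f -> contfun (A f)),
      (forall f g, contfun f -> contfun g -> A (f \+ g) = A f \+ A g),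
      (forall (c : R) f, contfun f -> A (fun x => c * f x) = (fun x => c * A f x)) &
      (forall f, contfun f -> (forall x, 0 <= f x) -> forall x, 0 <= A f x)].

Definition transfer_op (alpha : X -> X) (A : (X -> R) -> (X -> R)) : Prop :=
  pos_lin_op A /\
  forall f g, contfun f -> contfun g ->
    A (fun x => f (alpha x) * g x) = (fun x => f x * A g x).

Definition Aphi (A : (X -> R) -> (X -> R)) (phi : X -> R) (f : X -> R) : X -> R :=
  A (fun x => expR (phi x) * f x).

(* lambda(phi) = lim_n (1/n) ln ||A_phi^n 1|| (extended real, ln 0 = -oo) *)
Definition lambda (A : (X -> R) -> (X -> R)) (phi : X -> R) : \bar R :=
  limn (fun n : nat =>
    ((n%:R)^-1)%:E * lne (supnorm (iter n (Aphi A phi) cst1))%:E)%E.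

Definition state (m : (X -> R) -> R) : Prop :=
  [/\ (forall f g, contfun f -> contfun g -> m (f \+ g) = m f + m g),
      (forall (c : R) f, contfun f -> m (fun x => c * f x) = c * m f),
      (forall f, contfun f -> (forall x, 0 <= f x) -> 0 <= m f) &
      m cst1 = 1].

Definition inv_state (alpha : X -> X) (mu : (X -> R) -> R) : Prop :=
  state mu /\ forall f, contfun f -> mu (f \o alpha) = mu f.

(* partition of unity: a finite set D = {g_i | i < k} (injective indexing)
   of nonnegative continuous functions summing to 1 *)
Definition partition_of_unity (k : nat) (g : 'I_k -> X -> R) : Prop :=
  [/\ injective g,
      (forall i, contfun (g i)),
      (forall i x, 0 <= g i x) &
      (forall x, \sum_(i < k) g i x = 1)].

Definition tau_term (A : (X -> R) -> (X -> R)) (n : nat)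
    (mu m : (X -> R) -> R) (g : X -> R) : \bar R :=
  if mu g == 0 then 0%E
  else ((mu g)%:E * lne (m (iter n A g) / mu g)%:E)%E.

Definition tau_nD (A : (X -> R) -> (X -> R)) (n : nat) (mu : (X -> R) -> R)
    (k : nat) (g : 'I_k -> X -> R) : \bar R :=
  ereal_sup [set (\sum_(i < k) tau_term A n mu m (g i))%E | m in state].

Definition tau_n (A : (X -> R) -> (X -> R)) (n : nat) (mu : (X -> R) -> R)
    : \bar R :=
  ereal_inf [set t | exists k (g : 'I_k -> X -> R),
                      partition_of_unity g /\ t = tau_nD A n mu g].

Definition tau (A : (X -> R) -> (X -> R)) (mu : (X -> R) -> R) : \bar R :=
  ereal_inf [set (((n.+1)%:R)^-1%:E * tau_n A n.+1 mu)%E | n in [set: nat]].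

End Defs.

(* Write [S_n] for the Birkhoff sum [phi + phi \o alpha + ... + phi \o alpha^(n-1)].
   The transfer identity gives [A_phi^n f = A^n (e^(S_n) f)].  Cover the range of
   [S_n] by overlapping windows of width [2 delta] and take a partition of unity
   [(g_i)] subordinate to them, with [S_n >= c_i] on the support of [g_i].  For every
   state [m], [m[A^n g_i] <= e^(-c_i) m[A_phi^n g_i]], so by Jensen's inequality for
   [ln] the sum [\sum_i mu[g_i] ln (m[A^n g_i] / mu[g_i])] is at most
   [ln m[A_phi^n 1] - \sum_i c_i mu[g_i] <= ln ||A_phi^n 1|| - n mu[phi] + 2 delta],
   because [mu[S_n] = n mu[phi]] by invariance.  Hence
   [mu[phi] + tau(mu) <= (1/n) ln ||A_phi^n 1||] for every [n >= 1].  As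
   [n |-> ||A_phi^n 1||] is submultiplicative, Fekete's lemma identifies [lambda(phi)]
   with the infimum of the right-hand sides. *)

From HB Require Import structures.
From mathcomp Require Import all_boot all_order all_algebra.
From mathcomp Require Import all_classical all_reals all_analysis.
From mathcomp Require Import ring lra.
Import Order.TTheory GRing.Theory Num.Theory.
Import numFieldNormedType.Exports.
Local Open Scope classical_set_scope.
Local Open Scope ring_scope.
Set Implicit Arguments. Unset Strict Implicit.

Section Continuity.
Variables (R : realType) (X : topologicalType).
Implicit Types f g : X -> R.

Lemma continuousM_fun f g :
  continuous f -> continuous g -> continuous (fun x => f x * g x).
Proof. by move=> cf cg x; exact: continuousM (cf x) (cg x). Qed.

Lemma continuousD_fun f g :
  continuous f -> continuous g -> continuous (fun x => f x + g x).
Proof. by move=> cf cg x; exact: continuousD (cf x) (cg x). Qed.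

Lemma continuousB_fun f g :
  continuous f -> continuous g -> continuous (fun x => f x - g x).
Proof. by move=> cf cg x; exact: continuousB (cf x) (cg x). Qed.

Lemma continuous_min_fun f g :
  continuous f -> continuous g -> continuous (fun x => Num.min (f x) (g x)).
Proof. by move=> cf cg x; exact: continuous_min (cf x) (cg x). Qed.

Lemma continuous_max_fun f g :
  continuous f -> continuous g -> continuous (fun x => Num.max (f x) (g x)).
Proof. by move=> cf cg x; exact: continuous_max (cf x) (cg x). Qed.

Lemma continuous_expR_fun f : continuous f -> continuous (fun x => expR (f x)).
Proof. by move=> cf x; apply: continuous_comp; [exact: cf | exact: continuous_expR]. Qed.

Lemma continuous_sum_fun k (f : 'I_k -> X -> R) :
  (forall i, continuous (f i)) -> continuous (fun x => \sum_(i < k) f i x).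
Proof.
elim: k f => [|k IHk] f cf.
  by under eq_fun do rewrite big_ord0; exact: cst_continuous.
under eq_fun do rewrite big_ord_recr /=.
by apply: continuousD_fun; [exact: IHk | exact: cf].
Qed.

End Continuity.

Section PositiveLinearOperator.
Variables (R : realType) (X : topologicalType) (P : (X -> R) -> X -> R).
Hypothesis hP : pos_lin_op P.
Implicit Types f g : X -> R.

Lemma pos_lin_op_cont f : contfun f -> contfun (P f).
Proof. by case: hP => h _ _ _; exact: h. Qed.

Lemma pos_lin_opD f g : contfun f -> contfun g ->
  P (fun x => f x + g x) = (fun x => P f x + P g x).
Proof. by case: hP => _ h _ _; exact: h. Qed.

Lemma pos_lin_opZ c f : contfun f -> P (fun x => c * f x) = (fun x => c * P f x).
Proof. by case: hP => _ _ h _; exact: h. Qed.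

Lemma pos_lin_op_ge0 f : contfun f -> (forall x, 0 <= f x) -> forall x, 0 <= P f x.
Proof. by case: hP => _ _ _ h; exact: h. Qed.

Lemma pos_lin_opB f g : contfun f -> contfun g ->
  P (fun x => f x - g x) = (fun x => P f x - P g x).
Proof.
move=> cf cg; have cNg : contfun (fun x => -1 * g x).
  by apply: continuousM_fun => //; exact: cst_continuous.
under eq_fun do rewrite -mulN1r.
by rewrite pos_lin_opD // pos_lin_opZ //; under eq_fun do rewrite mulN1r.
Qed.

Lemma pos_lin_op_le f g : contfun f -> contfun g ->
  (forall x, f x <= g x) -> forall x, P f x <= P g x.
Proof.
move=> cf cg fg x; rewrite -subr_ge0.
have := @pos_lin_op_ge0 (fun x => g x - f x) (continuousB_fun cg cf).
by rewrite pos_lin_opB //; apply => y; rewrite subr_ge0.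
Qed.

Lemma pos_lin_op_sum k (f : 'I_k -> X -> R) : (forall i, contfun (f i)) ->
  P (fun x => \sum_(i < k) f i x) = (fun x => \sum_(i < k) P (f i) x).
Proof.
elim: k f => [|k IHk] f cf.
  under eq_fun do rewrite big_ord0 -(mul0r 0).
  rewrite pos_lin_opZ; last exact: cst_continuous.
  by apply: funext => x; rewrite big_ord0 mul0r.
under eq_fun do rewrite big_ord_recr /=.
rewrite pos_lin_opD; last 2 first.
- exact: (continuous_sum_fun (fun i => cf _)).
- exact: cf.
by rewrite IHk //; apply: funext => x; rewrite big_ord_recr.
Qed.

Lemma pos_lin_op_iter n : pos_lin_op (iter n P).
Proof.
elim: n => [|n [c1 a1 s1 p1]]; first by split.
split => [f cf | f g cf cg | c f cf | f cf f0 x] /=.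
- by apply: pos_lin_op_cont; exact: c1.
- by rewrite a1 // pos_lin_opD //; exact: c1.
- by rewrite s1 // pos_lin_opZ //; exact: c1.
- by apply: pos_lin_op_ge0; [exact: c1 | exact: p1].
Qed.

End PositiveLinearOperator.

Section State.
Variables (R : realType) (X : topologicalType) (m : (X -> R) -> R).
Hypothesis hm : state m.
Implicit Types f g : X -> R.

Lemma stateD f g : contfun f -> contfun g -> m (fun x => f x + g x) = m f + m g.
Proof. by case: hm => h _ _ _; exact: h. Qed.

Lemma stateZ c f : contfun f -> m (fun x => c * f x) = c * m f.
Proof. by case: hm => _ h _ _; exact: h. Qed.

Lemma state_ge0 f : contfun f -> (forall x, 0 <= f x) -> 0 <= m f.
Proof. by case: hm => _ _ h _; exact: h. Qed.

Lemma state_cst c : m (fun _ => c) = c.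
Proof.
have -> : (fun _ : X => c) = (fun x => c * @cst1 R X x) by apply: funext => x; rewrite mulr1.
by rewrite stateZ; [case: hm => _ _ _ ->; rewrite mulr1 | exact: cst_continuous].
Qed.

Lemma stateB f g : contfun f -> contfun g -> m (fun x => f x - g x) = m f - m g.
Proof.
move=> cf cg; have cNg : contfun (fun x => -1 * g x).
  by apply: continuousM_fun => //; exact: cst_continuous.
under eq_fun do rewrite -mulN1r.
by rewrite stateD // stateZ // mulN1r.
Qed.

Lemma state_le f g : contfun f -> contfun g -> (forall x, f x <= g x) -> m f <= m g.
Proof.
move=> cf cg fg; rewrite -subr_ge0 -stateB //.
by apply: state_ge0 => [|x]; [exact: continuousB_fun | rewrite subr_ge0].
Qed.

Lemma state_le_cst f c : contfun f -> (forall x, f x <= c) -> m f <= c.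
Proof. by move=> cf fc; rewrite -[c]state_cst; apply: state_le => //; exact: cst_continuous. Qed.

Lemma state_sum k (f : 'I_k -> X -> R) : (forall i, contfun (f i)) ->
  m (fun x => \sum_(i < k) f i x) = \sum_(i < k) m (f i).
Proof.
elim: k f => [|k IHk] f cf; first by under eq_fun do rewrite big_ord0; rewrite state_cst big_ord0.
under eq_fun do rewrite big_ord_recr /=.
rewrite stateD; last 2 first.
- exact: (continuous_sum_fun (fun i => cf _)).
- exact: cf.
by rewrite IHk ?big_ord_recr.
Qed.

Lemma state_inhabited : inhabited X.
Proof.
apply: contrapT => hX; have e1 : @cst1 R X = (fun _ => 0).
  by apply: funext => x; case: hX; constructor.
by have [_ _ _] := hm; rewrite e1 state_cst => /eqP; rewrite eq_sym oner_eq0.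
Qed.

End State.

Section SupNorm.
Variables (R : realType) (X : topologicalType).
Hypothesis hcomp : compact [set: X].
Implicit Types f : X -> R.

Lemma compact_continuous_bounded f : continuous f -> exists M, forall x, `|f x| <= M.
Proof.
move=> cf; have : compact (f @` [set: X]).
  by apply: continuous_compact => //; exact: continuous_subspaceT.
move=> /compact_bounded [M [_ hM]]; exists (M + 1) => x.
by apply: (hM (M + 1)); [rewrite ltrDl | exists x].
Qed.

Lemma supnorm_ge f x : continuous f -> `|f x| <= supnorm f.
Proof.
move=> cf; have [M hM] := compact_continuous_bounded cf.
by apply: ub_le_sup; [exists M => _ [y _ <-] | exists x].
Qed.

Lemma supnorm_ge0 f : inhabited X -> continuous f -> 0 <= supnorm f.
Proof. by move=> [x] cf; exact: le_trans (normr_ge0 (f x)) (supnorm_ge x cf). Qed.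

Lemma supnorm_le f c : inhabited X -> (forall x, `|f x| <= c) -> supnorm f <= c.
Proof. by move=> [x] fc; apply: ge_sup; [exists `|f x|, x | move=> _ [y _ <-]]. Qed.

Lemma supnorm_iter_submul (P : (X -> R) -> X -> R) n k : pos_lin_op P -> inhabited X ->
  supnorm (iter (n + k) P (@cst1 R X)) <=
  supnorm (iter n P (@cst1 R X)) * supnorm (iter k P (@cst1 R X)).
Proof.
move=> hP hX; have hPn := pos_lin_op_iter hP n.
set u := iter k P (@cst1 R X); set s := supnorm u.
have hPk := pos_lin_op_iter hP k; have c1 : contfun (@cst1 R X) by exact: cst_continuous.
have cu : contfun u by exact: pos_lin_op_cont.
have u0 x : 0 <= u x by apply: (pos_lin_op_ge0 hPk c1) => y; exact: ler01.
have cs : contfun (fun x => s * @cst1 R X x) by apply: continuousM_fun; exact: cst_continuous.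
have us x : u x <= s * @cst1 R X x by rewrite /cst1 mulr1 -[u x]ger0_norm ?supnorm_ge.
apply: supnorm_le => // x; rewrite iterD -/u ger0_norm; last exact: pos_lin_op_ge0.
apply: le_trans (pos_lin_op_le hPn cu cs us x) _.
rewrite pos_lin_opZ // mulrC ler_wpM2r ?supnorm_ge0 //.
have cn1 : contfun (iter n P (@cst1 R X)) by exact: pos_lin_op_cont.
by apply: le_trans (ler_norm _) (supnorm_ge _ cn1).
Qed.

End SupNorm.

Section BirkhoffSum.
Variables (R : realType) (X : topologicalType) (alpha : X -> X) (phi : X -> R).
Hypotheses (halpha : continuous alpha) (hphi : continuous phi).

Definition birkhoff_sum n x := \sum_(k < n) phi (iter k alpha x).

Lemma continuous_birkhoff_sum n : continuous (birkhoff_sum n).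
Proof.
have citer j : continuous (iter j alpha).
  elim: j => [|j IHj] x /=; first exact: cvg_id.
  by apply: continuous_comp; [exact: IHj | exact: halpha].
apply: continuous_sum_fun => k x.
by apply: continuous_comp; [exact: citer | exact: hphi].
Qed.

Lemma birkhoff_sumS n x : birkhoff_sum n.+1 x = phi x + birkhoff_sum n (alpha x).
Proof.
rewrite /birkhoff_sum big_ord_recl; congr (_ + _).
by apply: eq_bigr => i _; rewrite /= -iterSr.
Qed.

Lemma inv_state_birkhoff_sum mu n :
  inv_state alpha mu -> mu (birkhoff_sum n) = n%:R * mu phi.
Proof.
move=> [hmu hinv]; elim: n => [|n IHn].
  have -> : birkhoff_sum 0 = fun _ => 0 by apply: funext => x; rewrite /birkhoff_sum big_ord0.
  by rewrite state_cst // mul0r.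
have -> : birkhoff_sum n.+1 = (fun x => phi x + (birkhoff_sum n \o alpha) x).
  by apply: funext => x; rewrite birkhoff_sumS.
rewrite stateD //; last first.
  by move=> x; apply: continuous_comp; [exact: halpha | exact: continuous_birkhoff_sum].
by rewrite hinv ?IHn ?mulrSr ?mulrDl ?mul1r 1?addrC //; exact: continuous_birkhoff_sum.
Qed.

Lemma pos_lin_op_Aphi A : pos_lin_op A -> pos_lin_op (Aphi A phi).
Proof.
move=> hA; have ce := continuous_expR_fun hphi.
split => [f cf | f g cf cg | c f cf | f cf f0]; rewrite /Aphi.
- exact/(pos_lin_op_cont hA)/continuousM_fun.
- under eq_fun do rewrite mulrDr.
  by rewrite pos_lin_opD //; exact: continuousM_fun.
- under eq_fun do rewrite mulrCA.
  by rewrite pos_lin_opZ //; exact: continuousM_fun.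
- apply: (pos_lin_op_ge0 hA); first exact: continuousM_fun.
  by move=> x; rewrite mulr_ge0 ?expR_ge0.
Qed.

(* By the transfer identity [expR (birkhoff_sum n) * A h] is
   [A (expR (birkhoff_sum n \o alpha) * h)], and [phi + birkhoff_sum n \o alpha]
   is [birkhoff_sum n.+1]. *)
Lemma iter_Aphi A n f : transfer_op alpha A -> contfun f ->
  iter n (Aphi A phi) f = iter n A (fun x => expR (birkhoff_sum n x) * f x).
Proof.
move=> [hA htr]; elim: n f => [|n IHn] f cf.
  by apply: funext => x; rewrite /birkhoff_sum /= big_ord0 expR0 mul1r.
have cphif : contfun (fun x => expR (phi x) * f x).
  by apply: continuousM_fun => //; exact: continuous_expR_fun.
have cS := continuous_expR_fun (@continuous_birkhoff_sum n).
rewrite iterSr IHn; last exact: (pos_lin_op_cont hA cphif).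
rewrite /Aphi -htr //= -iterSr; congr (iter _ _ _); apply: funext => x.
by rewrite birkhoff_sumS expRD mulrA [expR (phi x) * _]mulrC.
Qed.

End BirkhoffSum.

Lemma jensen_ln (R : realType) k (w a : 'I_k -> R) :
  (forall i, 0 <= w i) -> \sum_(i < k) w i = 1 -> (forall i, 0 <= a i) ->
  (forall i, w i != 0 -> 0 < a i) -> 0 < \sum_(i < k) a i ->
  \sum_(i < k) w i * ln (a i / w i) <= ln (\sum_(i < k) a i).
Proof.
move=> w0 w1 a0 wa; set S := \sum_(i < k) a i => S0.
(* termwise tangent-line bound [ln y <= y - 1] at [y = a_i / (w_i S)] *)
have tangent i : w i * ln (a i / w i) <= a i / S - w i + w i * ln S.
  have [->|wi0] := eqVneq (w i) 0; first by rewrite !mul0r subr0 addr0 divr_ge0 // ltW.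
  have wi : 0 < w i by rewrite lt0r wi0 w0.
  have y0 : 0 < a i / (w i * S) by rewrite divr_gt0 ?mulr_gt0 ?wa.
  have -> : a i / w i = a i / (w i * S) * S.
    by rewrite invfM mulrA -mulrA mulVf ?mulr1 // gt_eqF.
  rewrite lnM ?posrE // mulrDr lerD2r.
  have hln : ln (a i / (w i * S)) <= a i / (w i * S) - 1.
    have := @le_ln1Dx R (a i / (w i * S) - 1); rewrite [1 + _]addrC subrK; apply; lra.
  apply: le_trans (ler_wpM2l (ltW wi) hln) _.
  by rewrite mulrBr mulr1 lerD2r le_eqVlt; apply/orP; left; apply/eqP; field; rewrite wi0 gt_eqF.
apply: le_trans (ler_sum _ (fun i _ => tangent i)) _.
rewrite big_split /= big_split /= sumrN -mulr_suml -mulr_suml w1 mul1r.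
by rewrite mulfV ?subrr ?add0r // gt_eqF.
Qed.

Lemma tau_term_le (R : realType) (X : topologicalType) (A : (X -> R) -> X -> R)
    (n : nat) (mu m : (X -> R) -> R) (g : X -> R) (a c : R) :
  0 <= mu g -> 0 <= m (iter n A g) -> (mu g != 0 -> 0 < a) ->
  expR c * m (iter n A g) <= a ->
  (tau_term A n mu m g <= (mu g * ln (a / mu g) - c * mu g)%:E)%E.
Proof.
rewrite /tau_term; set w := mu g; set b := m _ => w0 b0 wa ba.
have [->|wn0] := eqVneq w 0; first by rewrite mul0r mulr0 subrr.
have wp : 0 < w by rewrite lt0r wn0 w0.
have [->|bn0] := eqVneq b 0.
  by rewrite mul0r le0_lneNy // gt0_muleNy ?leNye // lte_fin.
have bp : 0 < b by rewrite lt0r bn0 b0.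
rewrite lne_EFin ?divr_gt0 // -EFinM lee_fin.
have ap : 0 < a := wa wn0.
have lnb : ln (b / w) <= ln (a / w) - c.
  rewrite lerBrDr -[c]expRK -lnM ?posrE ?expR_gt0 ?divr_gt0 //.
  have -> : b / w * expR c = expR c * b / w by rewrite mulrAC [b * _]mulrC.
  by rewrite ler_ln ?posrE ?mulr_gt0 ?expR_gt0 ?divr_gt0 ?invr_gt0 // ler_pM2r ?invr_gt0.
by apply: le_trans (ler_wpM2l w0 lnb) _; rewrite mulrBr [w * c]mulrC.
Qed.

Definition indexed_partition (R : realType) (X : topologicalType) k
    (g : 'I_k -> X -> R) : Prop :=
  [/\ (forall i, contfun (g i)), (forall i x, 0 <= g i x) &
      (forall x, \sum_(i < k) g i x = 1)].

Section TauSum.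
Variables (R : realType) (X : topologicalType) (alpha : X -> X) (phi : X -> R).
Variables (A : (X -> R) -> X -> R) (mu m : (X -> R) -> R) (n : nat).
Hypotheses (halpha : continuous alpha) (hphi : continuous phi).
Hypotheses (hA : transfer_op alpha A) (hmu : state mu) (hm : state m).

Lemma state_iter_Aphi_ge g c : contfun g -> (forall x, 0 <= g x) ->
  (forall x, c * g x <= birkhoff_sum alpha phi n x * g x) ->
  expR c * m (iter n A g) <= m (iter n (Aphi A phi) g).
Proof.
move=> cg g0 hc; have hAn := pos_lin_op_iter hA.1 n.
have ceg : contfun (fun x => expR c * g x) by exact/continuousM_fun/cg/cst_continuous.
have ceS : contfun (fun x => expR (birkhoff_sum alpha phi n x) * g x).
  exact/continuousM_fun/cg/continuous_expR_fun/continuous_birkhoff_sum.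
rewrite (iter_Aphi halpha hphi n hA cg) -(stateZ hm); last exact: pos_lin_op_cont.
rewrite -(pos_lin_opZ hAn) //.
apply: (state_le hm); [exact: pos_lin_op_cont.. |].
apply: (pos_lin_op_le hAn) => // x.
have [->|gx0] := eqVneq (g x) 0; first by rewrite !mulr0.
have gx : 0 < g x by rewrite lt0r gx0 g0.
by rewrite ler_pM2r // ler_expR -(ler_pM2r gx).
Qed.

Lemma sum_tau_term_le k (g : 'I_k -> X -> R) (c : 'I_k -> R) : indexed_partition g ->
  (forall i x, c i * g i x <= birkhoff_sum alpha phi n x * g i x) ->
  (\sum_(i < k) tau_term A n mu m (g i) <=
     lne (m (iter n (Aphi A phi) (@cst1 R X)))%:E - (\sum_(i < k) c i * mu (g i))%:E)%E.
Proof.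
move=> [cg g0 g1] hc.
have hAn := pos_lin_op_iter hA.1 n.
have hBn := pos_lin_op_iter (pos_lin_op_Aphi hphi hA.1) n.
set w := fun i => mu (g i); set a := fun i => m (iter n (Aphi A phi) (g i)).
have w0 i : 0 <= w i by exact: state_ge0.
have a0 i : 0 <= a i by apply/(state_ge0 hm)/pos_lin_op_ge0 => //; exact: pos_lin_op_cont.
have b0 i : 0 <= m (iter n A (g i)).
  by apply/(state_ge0 hm)/pos_lin_op_ge0 => //; exact: pos_lin_op_cont.
have hab i : expR (c i) * m (iter n A (g i)) <= a i := state_iter_Aphi_ge (cg i) (g0 i) (hc i).
have cst1E : @cst1 R X = (fun x => \sum_(i < k) g i x) by apply: funext => x; rewrite g1.
have wsum : \sum_(i < k) w i = 1 by rewrite -state_sum // -cst1E; case: hmu.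
have hS : m (iter n (Aphi A phi) (@cst1 R X)) = \sum_(i < k) a i.
  by rewrite cst1E (pos_lin_op_sum hBn) // state_sum // => i; exact: pos_lin_op_cont.
have [[i [wi ai]]|] := pselect (exists i, w i != 0 /\ a i = 0).
  (* a vanishing [m (A^n g_i)] with [mu g_i > 0] makes the i-th summand [-oo] *)
  have bi : m (iter n A (g i)) = 0.
    by apply/eqP; rewrite eq_le b0 andbT -(ler_pM2l (expR_gt0 (c i))) mulr0 -ai hab.
  rewrite (bigD1 i) //= /tau_term -/(w i) (negbTE wi) bi mul0r le0_lneNy //.
  by rewrite gt0_muleNy ?addNye ?leNye // lte_fin lt0r wi w0.
move=> hpos; have wa j : w j != 0 -> 0 < a j.
  by move=> wj; rewrite lt0r a0 andbT; apply/eqP => aj; apply: hpos; exists j.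
have [i0 wi0] : exists i, w i != 0.
  apply: contrapT => hw; move: wsum; rewrite big1 => [/eqP|i _]; first by rewrite eq_sym oner_eq0.
  by apply/eqP; apply: contrapT => wi; apply: hw; exists i; apply/negP.
have Sa : 0 < \sum_(i < k) a i.
  by apply: lt_le_trans (wa _ wi0) _; rewrite (bigD1 i0) //= lerDl sumr_ge0.
apply: (@le_trans _ _ (\sum_(i < k) (w i * ln (a i / w i) - c i * w i)%:E)).
  by apply: lee_sum => i _; apply: tau_term_le; [exact: w0 | exact: b0 | exact: wa | exact: hab].
by rewrite sumEFin hS lne_EFin // -EFinB lee_fin sumrB lerB // jensen_ln.
Qed.

End TauSum.

Section Ramp.
Variables (R : realType) (delta : R).
Hypothesis hdelta : 0 < delta.

Definition ramp (a s : R) : R := Num.min 1 (Num.max 0 ((s - a) / delta)).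

Lemma ramp_ge0 a s : 0 <= ramp a s.
Proof. by rewrite /ramp le_min ler01 le_max lexx. Qed.

Lemma ramp_le1 a s : ramp a s <= 1.
Proof. by rewrite /ramp ge_min lexx. Qed.

Lemma ramp_le a b s : a <= b -> ramp b s <= ramp a s.
Proof. by move=> ab; rewrite /ramp le_min2 // le_max2 // ler_pM2r ?invr_gt0 // lerB. Qed.

Lemma ramp_eq1 a s : a + delta <= s -> ramp a s = 1.
Proof.
by move=> h; apply/min_idPl; rewrite le_max ler_pdivlMr // mul1r; apply/orP; right; lra.
Qed.

Lemma ramp_eq0 a s : s <= a -> ramp a s = 0.
Proof.
move=> h; rewrite /ramp (max_idPl _) ?(min_idPr _) ?ler01 //.
by rewrite pmulr_lle0 ?invr_gt0 // subr_le0.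
Qed.

Lemma ramp_window a s : ramp (a + delta) s < ramp a s -> a < s < a + 2 * delta.
Proof.
move=> h; apply/andP; split.
- have r0 : 0 < ramp a s by apply: le_lt_trans h; exact: ramp_ge0.
  by rewrite ltNge; apply/negP => /ramp_eq0 r; rewrite r ltxx in r0.
- have r1 : ramp (a + delta) s < 1 by apply: lt_le_trans h _; exact: ramp_le1.
  rewrite ltNge; apply/negP => sa.
  by rewrite ramp_eq1 ?ltxx in r1; lra.
Qed.

Lemma continuous_ramp (X : topologicalType) a (f : X -> R) :
  continuous f -> continuous (fun x => ramp a (f x)).
Proof.
move=> cf; apply: continuous_min_fun; first exact: cst_continuous.
apply: continuous_max_fun; first exact: cst_continuous.
apply: continuousM_fun; last exact: cst_continuous.
by apply: continuousB_fun => //; exact: cst_continuous.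
Qed.

End Ramp.

Section RampPartition.
Variables (R : realType) (X : topologicalType) (psi : X -> R) (M delta : R).
Hypotheses (cpsi : continuous psi) (psiM : forall x, `|psi x| <= M) (hdelta : 0 < delta).

Definition level (j : nat) : R := - M - delta + j%:R * delta.

Definition ramp_step K (j : 'I_K) x :=
  ramp delta (level j) (psi x) - ramp delta (level j.+1) (psi x).

Lemma levelS j : level j.+1 = level j + delta.
Proof. by rewrite /level -natr1; ring. Qed.

Lemma ramp_step_window K (j : 'I_K) x :
  ramp_step j x != 0 -> level j < psi x < level j + 2 * delta.
Proof.
move=> hj; apply: (ramp_window hdelta); rewrite -levelS lt_neqAle eq_sym.
by move: hj; rewrite subr_eq0 => -> /=; apply: ramp_le; rewrite // levelS lerDl ltW.
Qed.

(* [K] is large enough that [ramp_step] telescopes to [1 - 0] on the range of [psi]. *)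
Lemma indexed_partition_ramp_step K :
  2 * M + delta < K%:R * delta -> indexed_partition (@ramp_step K).
Proof.
move=> hK; split => [j | j x | x].
- by apply: continuousB_fun; apply: continuous_ramp.
- by rewrite subr_ge0; apply: ramp_le; rewrite // levelS lerDl ltW.
- rewrite -(big_mkord xpredT
    (fun j => ramp delta (level j) (psi x) - ramp delta (level j.+1) (psi x))).
  rewrite (telescope_sumr_eq (fun j => - ramp delta (level j) (psi x))) // => [|j _]; last first.
    by rewrite opprK addrC.
  have [psiL psiU] : - M <= psi x /\ psi x <= M by move: (psiM x); rewrite ler_norml => /andP.
  by rewrite ramp_eq0 ?ramp_eq1 ?oppr0 ?opprK ?add0r // /level; lra.
Qed.

End RampPartition.

Section StepMinorant.
Variables (R : realType) (X : topologicalType) (mu : (X -> R) -> R) (psi : X -> R).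
Hypothesis hmu : state mu.

Definition step_minorant (eta : R) k (g : 'I_k -> X -> R) (c : 'I_k -> R) : Prop :=
  [/\ indexed_partition g, (forall i x, c i * g i x <= psi x * g i x) &
      eta <= \sum_(i < k) c i * mu (g i)].

Lemma exists_step_minorant (M delta : R) : continuous psi -> (forall x, `|psi x| <= M) ->
  0 < delta ->
  exists k (g : 'I_k -> X -> R) c, step_minorant (mu psi - 2 * delta) g c.
Proof.
move=> cpsi psiM hdelta.
set K := (Num.truncn (2 * M / delta)).+2.
have hK : 2 * M + delta < K%:R * delta.
  have := truncnS_gt (2 * M / delta); rewrite ltr_pdivrMr // /K -natr1; lra.
set g := @ramp_step _ _ psi M delta K; set t := level M delta.
have [cg g0 g1] := indexed_partition_ramp_step cpsi psiM hdelta hK.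
have c_le_psi (i : 'I_K) x : t i * g i x <= psi x * g i x.
  have [->|gi] := eqVneq (g i x) 0; first by rewrite !mulr0.
  by have /andP[ti _] := ramp_step_window hdelta gi; rewrite ler_wpM2r // ltW.
have psi_le_c (i : 'I_K) x : (psi x - 2 * delta) * g i x <= t i * g i x.
  have [->|gi] := eqVneq (g i x) 0; first by rewrite !mulr0.
  by have /andP[_ ti] := ramp_step_window hdelta gi; rewrite ler_wpM2r // lerBlDr ltW.
exists K, g, (fun i => t i); split => //.
have ctg (i : 'I_K) : contfun (fun x => t i * g i x).
  by apply: continuousM_fun; [exact: cst_continuous | exact: cg].
have cpsig (i : 'I_K) : contfun (fun x => (psi x - 2 * delta) * g i x).
  apply: continuousM_fun; last exact: cg.
  by apply: continuousB_fun => //; exact: cst_continuous.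
have -> : mu psi - 2 * delta = mu (fun x => \sum_(i < K) (psi x - 2 * delta) * g i x).
  under eq_fun do rewrite -mulr_sumr g1 mulr1.
  by rewrite stateB ?state_cst //; exact: cst_continuous.
have -> : \sum_(i < K) t i * mu (g i) = mu (fun x => \sum_(i < K) t i * g i x).
  by rewrite state_sum //; apply: eq_bigr => i _; rewrite stateZ.
apply: (state_le hmu) => [||x]; try exact: continuous_sum_fun.
by apply: ler_sum => i _; exact: psi_le_c.
Qed.

(* The partitions of unity in [tau_n] are sets, i.e. injective families.  Two equal
   members [g i = g j] are merged into [g i + g j] with constant [max (c i) (c j)],
   which is still below [psi] on the common support. *)
Lemma step_minorant_merge eta k (g : 'I_k.+1 -> X -> R) c :
  step_minorant eta g c -> ~ injective g ->
  exists (g' : 'I_k -> X -> R) c', step_minorant eta g' c'.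
Proof.
move=> [[cg g0 g1] hc heta] ginj.
have [i [j [eij nij]]] : exists i j, g i = g j /\ j != i.
  apply: contrapT => hne; apply: ginj => i j e; apply/eqP; apply: contrapT => ne.
  by apply: hne; exists i, j; split => //; apply/negP; rewrite eq_sym.
have [l0 il0 _] := unlift_some nij.
set h := fun l => if l == l0 then (fun x => g i x + g j x) else g (lift j l).
set cc := fun l => if l == l0 then Num.max (c i) (c j) else c (lift j l).
have sum_lift (F : 'I_k.+1 -> R) :
    \sum_(l < k.+1) F l = F i + F j + \sum_(l < k | l != l0) F (lift j l).
  by rewrite (bigD1_ord j) //= (bigD1 l0) //= -il0 addrA [F j + _]addrC.
exists h, cc; split; first split.
- by move=> l; rewrite /h; case: eqP => _; [apply: continuousD_fun | ]; exact: cg.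
- by move=> l x; rewrite /h; case: eqP => _; [rewrite addr_ge0 | exact: g0].
- move=> x; rewrite -(g1 x) sum_lift (bigD1 l0) //= /h eqxx; congr (_ + _).
  by apply: eq_bigr => l /negbTE ->.
- move=> l x; rewrite /h /cc; case: eqP => _; last exact: hc.
  rewrite !mulrDr; apply: lerD.
    by case: (leP (c i) (c j)) => _; [rewrite eij | idtac]; exact: hc.
  by case: (leP (c i) (c j)) => _; [idtac | rewrite -eij]; exact: hc.
- apply: le_trans heta _; rewrite sum_lift [X in _ <= X](bigD1 l0) //= /h /cc eqxx.
  rewrite [X in _ <= _ + X](eq_bigr (fun l => c (lift j l) * mu (g (lift j l)))).
    by rewrite lerD2r stateD // mulrDr lerD // ler_wpM2r ?state_ge0 // le_max lexx ?orbT.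
  by move=> l /negbTE ->.
Qed.

Lemma exists_injective_step_minorant eta k (g : 'I_k -> X -> R) c :
  step_minorant eta g c ->
  exists k' (g' : 'I_k' -> X -> R) c', injective g' /\ step_minorant eta g' c'.
Proof.
elim: k g c => [|k IHk] g c hg; first by exists 0%N, g, c; split => // [[]].
have [ginj|ginj] := pselect (injective g); first by exists k.+1, g, c.
have [g' [c' hg']] := step_minorant_merge hg ginj.
exact: IHk hg'.
Qed.

End StepMinorant.

Lemma lne_EFin_le (R : realType) (r s : R) : r <= s -> (lne r%:E <= lne s%:E)%E.
Proof.
move=> rs; have [r0|r0] := lerP r 0; first by rewrite le0_lneNy ?leNye.
by rewrite !lne_EFin ?(lt_le_trans r0) // lee_fin ler_ln ?posrE ?(lt_le_trans r0).
Qed.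

Section TauBound.
Variables (R : realType) (X : topologicalType) (alpha : X -> X) (phi : X -> R).
Variables (A : (X -> R) -> X -> R) (mu : (X -> R) -> R).
Hypotheses (hcomp : compact [set: X]) (halpha : continuous alpha) (hphi : continuous phi).
Hypotheses (hA : transfer_op alpha A) (hmu : inv_state alpha mu).

Let growth n := supnorm (iter n (Aphi A phi) (@cst1 R X)).

Let continuous_iter_Aphi n : contfun (iter n (Aphi A phi) (@cst1 R X)).
Proof.
apply: pos_lin_op_cont; last exact: cst_continuous.
exact/pos_lin_op_iter/pos_lin_op_Aphi/hA.1.
Qed.

Lemma tau_n_le n (delta : R) : 0 < delta ->
  (tau_n A n mu <= lne (growth n)%:E - (n%:R * mu phi - 2 * delta)%:E)%E.
Proof.
move=> hdelta; have [hs _] := hmu.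
have cS := continuous_birkhoff_sum halpha hphi (n := n).
have [M hM] := compact_continuous_bounded hcomp cS.
have [k [g [c hg]]] := exists_step_minorant hs cS hM hdelta.
have [k' [g' [c' [ginj [hpart hc heta]]]]] := exists_injective_step_minorant hs hg.
rewrite -(inv_state_birkhoff_sum halpha hphi n hmu).
have : (tau_n A n mu <= tau_nD A n mu g')%E.
  by apply: ereal_inf_lbound; exists k', g'; split => //; case: hpart.
move/le_trans; apply; apply: ge_ereal_sup => _ [m hm <-].
apply: le_trans (sum_tau_term_le halpha hphi hA hs hm hpart hc) _.
apply: leeD; last by rewrite leeN2 lee_fin.
apply: lne_EFin_le; apply: (state_le_cst hm) => [|x]; first exact: continuous_iter_Aphi.
by apply: le_trans (ler_norm _) _; exact: (supnorm_ge hcomp x (@continuous_iter_Aphi n)).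
Qed.

Lemma tau_le_growth n :
  ((mu phi)%:E + tau A mu <= ((n.+1%:R)^-1)%:E * lne (growth n.+1)%:E)%E.
Proof.
have hX := state_inhabited hmu.1.
have n1 : 0 < (n.+1%:R : R) by rewrite ltr0n.
have htau : (tau A mu <= ((n.+1%:R)^-1)%:E * tau_n A n.+1 mu)%E.
  by apply: ereal_inf_lbound; exists n.
have [g0|gpos] := eqVneq (growth n.+1) 0.
  (* then [tau_n = -oo], hence [tau = -oo] *)
  have := tau_n_le n.+1 ltr01; rewrite g0 le0_lneNy // addNye leeNy_eq => /eqP tn.
  move: htau; rewrite tn gt0_muleNy ?lte_fin ?invr_gt0 // leeNy_eq => /eqP ->.
  by rewrite addeNy leNye.
have gp : 0 < growth n.+1.
  by rewrite lt_neqAle eq_sym gpos (supnorm_ge0 hcomp hX (@continuous_iter_Aphi n.+1)).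
rewrite lne_EFin // -EFinM; apply/lee_addgt0Pr => e e0.
have hdelta : 0 < e * n.+1%:R / 2 by rewrite divr_gt0 // mulr_gt0.
have := tau_n_le n.+1 hdelta; rewrite lne_EFin // -EFinB => htau_n.
have := le_trans htau (lee_wpmul2l _ htau_n).
rewrite -EFinM lee_fin invr_ge0 ler0n => /(_ isT) hle.
apply: le_trans (leeD (lexx (mu phi)%:E) hle) _.
by rewrite -!EFinD lee_fin le_eqVlt; apply/orP; left; apply/eqP; field; rewrite gt_eqF.
Qed.

End TauBound.

Section Fekete.
Variables (R : realType) (U : nat -> R).
Hypothesis subadditive : forall n k, U (n + k)%N <= U n + U k.

Lemma subadditive_mul_add p q r : U (q * p + r)%N <= q%:R * U p + U r.
Proof.
elim: q => [|q IHq]; first by rewrite mul0n add0n mul0r add0r.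
rewrite mulSn -addnA; apply: le_trans (subadditive _ _) _.
by rewrite -natr1 mulrDl mul1r; lra.
Qed.

Lemma div_le_slope_add (u s w n p C : R) : 0 < n -> 0 < p -> w <= n ->
  n < w + p -> u <= w * s + C -> u / n <= s + (`|s * p| + C) / n.
Proof.
move=> n0 p0 wn nw h; rewrite ler_pdivrMr // mulrDl divfK ?gt_eqF //.
have [s0|s0] := lerP 0 s.
  have := ler_wpM2r s0 wn; have := normr_ge0 (s * p); lra.
rewrite ltr0_norm ?pmulr_llt0 //.
have : w * s <= (n - p) * s by rewrite ler_wnM2r ?(ltW s0) //; lra.
lra.
Qed.

Lemma fekete :
  (fun n => (U n.+1 / n.+1%:R)%:E) @ \oo -->
    ereal_inf (range (fun n => (U n.+1 / n.+1%:R)%:E)).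
Proof.
set v := fun n => (U n.+1 / n.+1%:R)%:E.
apply: limn_esup_le_cvg; last by move=> n; apply: ereal_inf_lbound; exists n.
apply: le_ereal_inf_tmp => _ [N _ <-]; set p := N.+1.
have p0 : 0 < (p%:R : R) by rewrite ltr0n.
set C := \sum_(r < p) `|U r|; set s := U p / p%:R; set K := `|s * p%:R| + C.
apply/lee_addgt0Pr => e e0.
have hm := truncnS_gt (K / e); set m := Num.truncn (K / e) in hm.
have : (limn_esup v <= esups v m)%E.
  rewrite limn_esup_lim (cvg_lim _ (@cvg_esups_inf _ v)) //.
  by apply: ereal_inf_lbound; exists m.
move/le_trans; apply; apply: ge_ereal_sup => _ [k /= mk <-].
rewrite /v -EFinD lee_fin; set n := k.+1.
have n0 : 0 < (n%:R : R) by rewrite ltr0n.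
have hn : n = (n %/ p * p + n %% p)%N by rewrite -divn_eq.
have rp : (n %% p < p)%N by rewrite ltn_pmod.
have C0 : 0 <= C by apply: sumr_ge0 => i _.
have hU : U n <= ((n %/ p) * p)%:R * s + C.
  rewrite {1}hn; apply: le_trans (subadditive_mul_add _ _ _) _.
  have -> : ((n %/ p) * p)%:R * s = (n %/ p)%:R * U p.
    by rewrite natrM /s; field; rewrite gt_eqF.
  rewrite lerD2l.
  apply: le_trans (ler_norm _) _.
  by rewrite /C (bigD1 (Ordinal rp)) //= lerDl sumr_ge0.
have wn : (((n %/ p) * p)%:R : R) <= n%:R by rewrite ler_nat [X in (_ <= X)%N]hn leq_addr.
have nw : (n%:R : R) < ((n %/ p) * p)%:R + p%:R.
  by rewrite -natrD ltr_nat [X in (X < _)%N]hn ltn_add2l.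
apply: le_trans (div_le_slope_add n0 p0 wn nw hU) _.
rewrite lerD2l -/K ler_pdivrMr // -ler_pdivrMl // mulrC.
by apply/ltW/(lt_le_trans hm); rewrite ler_nat ltnS.
Qed.

End Fekete.

Lemma limn_ln_submul (R : realType) (a : nat -> R) : (forall n, 0 < a n) ->
  (forall n k, a (n + k)%N <= a n * a k) ->
  limn (fun n => ((n%:R)^-1)%:E * lne (a n)%:E)%E =
    ereal_inf (range (fun n => (ln (a n.+1) / n.+1%:R)%:E)).
Proof.
move=> apos asub; apply: cvg_lim => //; rewrite -cvg_shiftS.
have lnsub n k : ln (a (n + k)%N) <= ln (a n) + ln (a k).
  by rewrite -lnM ?posrE // ler_ln ?posrE ?mulr_gt0.
apply: cvg_trans (fekete lnsub); apply: near_eq_cvg; apply: nearW => n /=.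
by rewrite (lt_geF (apos n.+1)) -EFinM mulrC.
Qed.

Unset Implicit Arguments.

Theorem lemma1p11 (R : realType) (X : topologicalType)
  (hcomp : compact [set: X]) (hhaus : hausdorff_space X)
  (alpha : X -> X) (halpha : continuous alpha)
  (A : (X -> R) -> (X -> R)) (hA : transfer_op alpha A)
  (phi : X -> R) (hphi : continuous phi)
  (mu : (X -> R) -> R) (hmu : inv_state alpha mu) :
  ((mu phi)%:E + tau A mu <= lambda A phi)%E.
Proof.
have hX := state_inhabited hmu.1.
have hB := pos_lin_op_Aphi hphi hA.1.
set a := fun n => supnorm (iter n (Aphi A phi) (@cst1 R X)).
have hbound := tau_le_growth hcomp halpha hphi hA hmu.
have [[n an0]|an0] := pselect (exists n, a n.+1 = 0).
  move: (hbound n); rewrite -/(a n.+1) an0 le0_lneNy //.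
  by rewrite gt0_muleNy ?lte_fin ?invr_gt0 ?ltr0n // leeNy_eq => /eqP ->; rewrite leNye.
have c1 : contfun (@cst1 R X) by exact: cst_continuous.
have apos n : 0 < a n.
  case: n => [|n]; last first.
    have cAn := pos_lin_op_cont (pos_lin_op_iter hB n.+1) c1.
    rewrite lt_neqAle eq_sym (supnorm_ge0 hcomp hX cAn) andbT.
    by apply/eqP => an; apply: an0; exists n.
  case: hX => x; apply: lt_le_trans (supnorm_ge hcomp x c1).
  by rewrite normr1 ltr01.
rewrite /lambda (limn_ln_submul apos (fun n k => supnorm_iter_submul hcomp n k hB hX)).
apply: le_ereal_inf_tmp => _ [n _ <-].
by move: (hbound n); rewrite -/(a n.+1) (lne_EFin (apos n.+1)) -EFinM mulrC.
Qed.
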